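(* Let $\mathbb{X}=\{T,F\}$, $n\ge1$, and for $i=1,\dots,n$ let $m_i$ be a mass function on $\mathbb{X}_i=\mathbb{X}$ with belief function $Bel_{\mathbb{X}_i}$. Let $m$ be the mass function of the disjunctive combination of the vacuous extensions of $Bel_{\mathbb{X}_1},\dots,Bel_{\mathbb{X}_n}$ to $\mathbb{X}_1\times\cdots\times\mathbb{X}_n$. Then for every tuple $(x_1,\dots,x_n)$ with $x_i\in\mathbb{X}$, \[ m\big(\{(x_1,\dots,x_n)\}^c\big)=\prod_{i=1}^n m_i(\{x_i\}^c), \] $m(\mathbb{X}_1\times\cdots\times\mathbb{X}_n)=1-\sum_{(x_1,\dots,x_n)}\prod_{i=1}^n m_i(\{x_i\}^c)$, and $m$ vanishes on all other subsets. In particular, when every $m_i$ gives positive mass to $\{T\}$, $\{F\}$ and $\mathbb{X}$, the combination has exactly $2^n+1$ focal elements: the $2^n$ complements of singletons of $\mathbb{X}_1\times\cdots\times\mathbb{X}_n$ and the whole product.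
   Context: Mass function on a finite set $\Theta$: $m:2^\Theta\to[0,1]$ with $m(\emptyset)=0$ and $\sum_A m(A)=1$; focal elements are sets of positive mass; $Bel(A)=\sum_{B\subseteq A}m(B)$. Disjunctive combination: $m_{\cup}(A)=\sum_{B\cup C=A}m_1(B)m_2(C)$, extended associatively to $n$ arguments. Complements $\{x_i\}^c$ are taken in $\mathbb{X}$ and $\{(x_1,\dots,x_n)\}^c$ in $\mathbb{X}_1\times\cdots\times\mathbb{X}_n$. Vacuous extension of $m_i$ to $\mathbb{X}_1\times\cdots\times\mathbb{X}_n$: mass $m_i(B)$ on $\mathbb{X}_1\times\cdots\times\mathbb{X}_{i-1}\times B\times\mathbb{X}_{i+1}\times\cdots\times\mathbb{X}_n$, zero elsewhere. *)

From mathcomp Require Import all_boot all_order all_algebra.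
Set Implicit Arguments. Unset Strict Implicit. Unset Printing Implicit Defensive.
Import Order.TTheory GRing.Theory Num.Theory.
Local Open Scope ring_scope.

Definition is_mass (R : realFieldType) (T : finType) (m : {set T} -> R) : Prop :=
  m set0 = 0 /\ (forall A, 0 <= m A <= 1) /\ \sum_(A : {set T}) m A = 1.

Definition focal (R : realFieldType) (T : finType) (m : {set T} -> R) : {set {set T}} :=
  [set A | 0 < m A].

Definition disj (R : realFieldType) (T : finType) (m1 m2 : {set T} -> R) : {set T} -> R :=
  fun A => \sum_(B : {set T}) \sum_(C : {set T} | B :|: C == A) m1 B * m2 C.

Definition disj_unit (R : realFieldType) (T : finType) : {set T} -> R :=
  fun A => (A == set0)%:R.

(* n-ary disjunctive combination (associative extension); for n >= 1 the
   neutral element disj_unit does not change the result. *)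
Definition disjn (R : realFieldType) (T : finType) (n : nat)
  (ms : 'I_n -> {set T} -> R) : {set T} -> R :=
  foldr (@disj R T) (@disj_unit R T) [seq ms i | i <- enum 'I_n].

(* The frame X = {T, F} is bool (true = T, false = F); the product
   X_1 x ... x X_n is {ffun 'I_n -> bool}. *)
Definition prodX (n : nat) := {ffun 'I_n -> bool}.

Definition vacuous_ext (R : realFieldType) (n : nat) (i : 'I_n)
  (mi : {set bool} -> R) : {set prodX n} -> R :=
  fun A => \sum_(B : {set bool} | A == [set x : prodX n | x i \in B]) mi B.

From mathcomp Require Import all_boot all_order all_algebra.
Set Implicit Arguments. Unset Strict Implicit. Unset Printing Implicit Defensive.
Import Order.TTheory GRing.Theory Num.Theory.
Local Open Scope ring_scope.

(* A mass function is determined by its belief function, and the belief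
   function of a disjunctive combination is the product of those of its
   arguments.  For A other than the whole product, the belief of the i-th
   vacuous extension at A collects exactly the masses m_i({b}^c) of those
   cylinders over {b}^c that lie in A.  Expanding the product over i gives a
   sum over tuples x, where x contributes prod_i m_i({x_i}^c) precisely when
   all cylinders over the {x_i}^c lie in A, i.e. when {x}^c lies in A.  This is
   the belief function of the mass putting prod_i m_i({x_i}^c) on each {x}^c
   and the rest on the whole product. *)

Lemma big_fibers (V : nmodType) (I J : finType) (P : pred J) (h : I -> J)
    (F : I -> V) :
  \sum_(j | P j) \sum_(i | h i == j) F i = \sum_(i | P (h i)) F i.
Proof.
rewrite (partition_big h P) //; apply: eq_bigr => j Pj; apply: eq_bigl => i.
by apply/esym/andb_idl => /eqP ->.
Qed.

Lemma sum_setbool (V : nmodType) (G : {set bool} -> V) :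
  \sum_(D : {set bool}) G D = G set0 + G setT + \sum_(b : bool) G [set~ b].
Proof.
pose S (p : bool * bool) : {set bool} := [set b | if b then p.1 else p.2].
have S_bij : bijective S.
  exists (fun D : {set bool} => (true \in D, false \in D)).
    by case=> a b; rewrite !inE.
  by move=> D; apply/setP; case; rewrite inE.
rewrite (reindex S); last exact: onW_bij.
rewrite -(pair_bigA _ (fun a b => G (S (a, b)))) !big_bool /=.
have -> : S (true, true) = setT by apply/setP; case; rewrite !inE.
have -> : S (false, false) = set0 by apply/setP; case; rewrite !inE.
have -> : S (true, false) = [set~ false] by apply/setP; case; rewrite !inE.
have -> : S (false, true) = [set~ true] by apply/setP; case; rewrite !inE.
by rewrite [RHS]addrACA [RHS]addrC [G set0 + _]addrC.
Qed.

Lemma prodr_lt1 (R : numDomainType) (I : finType) (i0 : I) (F : I -> R) :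
  (forall i, 0 <= F i <= 1) -> F i0 < 1 -> \prod_i F i < 1.
Proof.
move=> F01 Fi0_lt1; rewrite (bigD1 i0) //=; apply: le_lt_trans Fi0_lt1.
by apply: ler_piMr; [case/andP: (F01 i0) | exact: prodr_ile1].
Qed.

Lemma setC1_neqT (T : finType) (x : T) : [set~ x] != setT.
Proof. by apply/eqP=> /setP/(_ x); rewrite !inE eqxx. Qed.

Lemma card_setT_setC1 (T : finType) :
  #|setT |: [set [set~ x] | x : T]| = #|T|.+1.
Proof.
rewrite cardsU1 card_imset; last by move=> x y /setC_inj /set1_inj.
suff -> : setT \notin [set [set~ x] | x : T] by rewrite cardT -cardE.
by apply/imsetP=> -[x _ /eqP]; rewrite eq_sym (negbTE (setC1_neqT x)).
Qed.

Definition bel (V : nmodType) (T : finType) (f : {set T} -> V) (A : {set T}) : V :=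
  \sum_(B : {set T} | B \subset A) f B.

Lemma bel_inj (V : zmodType) (T : finType) (f g : {set T} -> V) :
  bel f =1 bel g -> f =1 g.
Proof.
move=> fg A; have [k] := ubnP #|A|; elim: k A => // k IH A ltAk.
have := fg A; rewrite /bel (bigD1 A) // [RHS](bigD1 A) //= (eq_bigr g).
  by move/addIr.
move=> B /andP[sBA nBA]; apply: IH; rewrite -ltnS (leq_trans _ ltAk) // ltnS.
by apply: proper_card; rewrite properEneq nBA.
Qed.

Section DisjunctiveCombination.
Variables (R : realFieldType) (T : finType).

Lemma bel_disj (f g : {set T} -> R) (A : {set T}) :
  bel (disj f g) A = bel f A * bel g A.
Proof.
rewrite /bel /disj; under eq_bigr do rewrite pair_big_dep /=.
rewrite (big_fibers _ (fun p : {set T} * {set T} => p.1 :|: p.2)).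
by rewrite big_distrlr pair_big_dep; apply: eq_bigl => p; rewrite subUset.
Qed.

Lemma bel_disj_unit (A : {set T}) : bel (@disj_unit R T) A = 1.
Proof.
rewrite /bel (bigD1 set0) ?sub0set //= /disj_unit eqxx big1 ?addr0 //.
by move=> B /andP[_ /negbTE ->].
Qed.

Lemma bel_disjn (n : nat) (ms : 'I_n -> {set T} -> R) (A : {set T}) :
  bel (disjn ms) A = \prod_(i < n) bel (ms i) A.
Proof.
rewrite /disjn -big_enum /= -(big_map ms xpredT (fun f => bel f A)).
elim: (map _ _) => [|f l IH] /=; first by rewrite big_nil bel_disj_unit.
by rewrite big_cons bel_disj IH.
Qed.

End DisjunctiveCombination.

Definition cylinder (n : nat) (i : 'I_n) (D : {set bool}) : {set prodX n} :=
  [set x : prodX n | x i \in D].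

Lemma cylinderT (n : nat) (i : 'I_n) : cylinder i setT = setT.
Proof. by apply/setP=> x; rewrite !inE. Qed.

Lemma setC1_bigcup_cylinder (n : nat) (x : prodX n) :
  [set~ x] = \bigcup_i cylinder i [set~ x i].
Proof.
apply/setP=> y; rewrite in_setC1; apply/idP/bigcupP=> [y_neq_x | [i _]]; last first.
  by rewrite !inE; apply: contra => /eqP ->.
have /existsP[i yi_neq_xi] : [exists i, y i != x i].
  rewrite -negb_forall; apply: contra y_neq_x => /forallP y_eq_x.
  by apply/eqP/ffunP=> i; apply/eqP.
by exists i; rewrite ?inE.
Qed.

Lemma bel_vacuous_ext (R : realFieldType) (n : nat) (i : 'I_n)
    (mi : {set bool} -> R) (A : {set prodX n}) :
  bel (vacuous_ext i mi) A = \sum_(D | cylinder i D \subset A) mi D.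
Proof.
rewrite /bel /vacuous_ext; under eq_bigr do under eq_bigl do rewrite eq_sym.
by rewrite (big_fibers _ (fun D : {set bool} => [set x : prodX n | x i \in D])).
Qed.

Lemma sum_mass_setC1 (R : realFieldType) (m : {set bool} -> R) :
  is_mass m -> \sum_(b : bool) m [set~ b] = 1 - m setT.
Proof. by case=> m0 [_ <-]; rewrite sum_setbool m0 add0r addrAC subrr add0r. Qed.

Section VacuousCombination.
Variables (R : realFieldType) (n : nat) (ms : 'I_n -> {set bool} -> R).
Hypothesis ms_mass : forall i, is_mass (ms i).

Local Notation m := (disjn (fun i => vacuous_ext i (ms i))).

Definition setC1_mass (x : prodX n) : R := \prod_(i < n) ms i [set~ x i].

Definition vacuous_disjn_mass (A : {set prodX n}) : R :=
  (if A == setT then 1 - \sum_x setC1_mass x else 0)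
  + \sum_(x | [set~ x] == A) setC1_mass x.

Lemma bel_vacuous_disjn_mass (A : {set prodX n}) :
  bel vacuous_disjn_mass A =
  (if A == setT then 1 - \sum_x setC1_mass x else 0)
  + \sum_(x | [set~ x] \subset A) setC1_mass x.
Proof.
rewrite /bel big_split /= (big_fibers (fun B : {set prodX n} => B \subset A)).
congr (_ + _).
have [-> | nA] := eqVneq A setT.
  rewrite (bigD1 setT) ?subsetT //= eqxx addrC big1 ?add0r //.
  by move=> B /andP[_ /negbTE ->].
by apply: big1 => B; case: eqP => // ->; rewrite subTset (negbTE nA).
Qed.

Lemma bel_vacuous_disjn_setT : bel m setT = 1.
Proof.
rewrite bel_disjn big1 // => i _; rewrite bel_vacuous_ext.
by rewrite (eq_bigl xpredT) => [|D]; [case: (ms_mass i) => _ [] | exact: subsetT].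
Qed.

Lemma bel_vacuous_disjn (A : {set prodX n}) : A != setT ->
  bel m A = \sum_(x | [set~ x] \subset A) setC1_mass x.
Proof.
move=> nA; rewrite bel_disjn.
have factorE i : bel (vacuous_ext i (ms i)) A =
    \sum_b (if cylinder i [set~ b] \subset A then ms i [set~ b] else 0).
  rewrite bel_vacuous_ext big_mkcond sum_setbool cylinderT subTset (negbTE nA).
  by rewrite (ms_mass i).1 if_same addr0 add0r.
under eq_bigr do rewrite factorE.
rewrite bigA_distr_bigA /= [RHS]big_mkcond; apply: eq_bigr => x _.
rewrite (setC1_bigcup_cylinder x); case: bigcupsP => [sub | nsub].
  by apply: eq_bigr => i _; rewrite sub.
have /existsP[i /negbTE nsub_i] : [exists i, ~~ (cylinder i [set~ x i] \subset A)].
  by rewrite -negb_forall; apply/negP=> /forallP sub; apply: nsub => i _.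
by rewrite (bigD1 i) //= nsub_i mul0r.
Qed.

Lemma vacuous_disjnE : m =1 vacuous_disjn_mass.
Proof.
apply: bel_inj => A; rewrite bel_vacuous_disjn_mass.
have [-> | nA] := eqVneq A setT; last by rewrite bel_vacuous_disjn // add0r.
rewrite bel_vacuous_disjn_setT [X in _ + X](eq_bigl xpredT) ?subrK // => x.
exact: subsetT.
Qed.

Lemma vacuous_disjn_mass_setC1 (x : prodX n) :
  vacuous_disjn_mass [set~ x] = setC1_mass x.
Proof.
rewrite /vacuous_disjn_mass (negbTE (setC1_neqT x)) add0r (big_pred1 x) // => y.
by rewrite /= (inj_eq (@setC_inj _)) (inj_eq (@set1_inj _)).
Qed.

Lemma vacuous_disjn_mass_setT :
  vacuous_disjn_mass setT = 1 - \sum_x setC1_mass x.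
Proof.
rewrite /vacuous_disjn_mass eqxx addrC big_pred0 ?add0r // => x.
exact/negbTE/setC1_neqT.
Qed.

Lemma vacuous_disjn_mass_eq0 (A : {set prodX n}) :
  A != setT -> (forall x, A != [set~ x]) -> vacuous_disjn_mass A = 0.
Proof.
move=> nA nx; rewrite /vacuous_disjn_mass (negbTE nA) add0r big_pred0 // => x.
by rewrite eq_sym (negbTE (nx x)).
Qed.

Lemma sum_setC1_mass : \sum_x setC1_mass x = \prod_(i < n) (1 - ms i setT).
Proof.
rewrite /setC1_mass -(bigA_distr_bigA (fun i b => ms i [set~ b])).
by apply: eq_bigr => i _; apply: sum_mass_setC1.
Qed.

Lemma sum_setC1_mass_lt1 : (0 < n)%N -> (forall i, 0 < ms i setT) ->
  \sum_x setC1_mass x < 1.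
Proof.
move=> n_gt0 mT_gt0; rewrite sum_setC1_mass (prodr_lt1 (i0 := Ordinal n_gt0)) //.
  move=> i; case/andP: ((ms_mass i).2.1 setT) => m_ge0 m_le1.
  by rewrite subr_ge0 gerBl m_le1.
by rewrite gtrBl.
Qed.

Lemma setC1_mass_gt0 (x : prodX n) : (forall i b, 0 < ms i [set b]) ->
  0 < setC1_mass x.
Proof.
move=> m1_gt0; apply: prodr_gt0 => i _.
by have -> : [set~ x i] = [set ~~ x i] by apply/setP; case; case: (x i); rewrite !inE.
Qed.

Lemma focal_vacuous_disjn_mass : (0 < n)%N ->
  (forall i b, 0 < ms i [set b]) -> (forall i, 0 < ms i setT) ->
  focal vacuous_disjn_mass = setT |: [set [set~ x] | x : prodX n].
Proof.
move=> n_gt0 m1_gt0 mT_gt0; apply/setP=> A; rewrite !inE.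
have [-> | nA] /= := eqVneq A setT.
  by rewrite vacuous_disjn_mass_setT subr_gt0 sum_setC1_mass_lt1.
case: (pickP (fun x => A == [set~ x])) => [x /eqP -> | nx].
  by rewrite vacuous_disjn_mass_setC1 setC1_mass_gt0 //; apply/esym/imsetP; exists x.
have /negbTE -> : A \notin [set [set~ x] | x : prodX n].
  by apply/imsetP=> -[x _ /eqP]; rewrite nx.
by rewrite vacuous_disjn_mass_eq0 ?ltxx // => x; rewrite nx.
Qed.

End VacuousCombination.

Theorem lemma2 (R : realFieldType) (n : nat) (ms : 'I_n -> {set bool} -> R) :
  (0 < n)%N ->
  (forall i, is_mass (ms i)) ->
  let m := disjn (fun i => vacuous_ext i (ms i)) in
  [/\ (forall x : prodX n, m (~: [set x]) = \prod_(i < n) ms i (~: [set x i])),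
      m setT = 1 - \sum_(x : prodX n) \prod_(i < n) ms i (~: [set x i]),
      (forall A : {set prodX n}, A != setT -> (forall x, A != ~: [set x]) -> m A = 0)
    & ((forall i, 0 < ms i [set true] /\ 0 < ms i [set false] /\ 0 < ms i setT) ->
       focal m = setT |: [set ~: [set x] | x : prodX n]
       /\ #|focal m| = (2 ^ n).+1)].
Proof.
move=> n_gt0 ms_mass m.
have mE : m =1 vacuous_disjn_mass ms by apply: vacuous_disjnE.
split=> [x | | A | pos]; rewrite ?mE.
- exact: vacuous_disjn_mass_setC1.
- exact: vacuous_disjn_mass_setT.
- exact: vacuous_disjn_mass_eq0.
have m1_gt0 i b : 0 < ms i [set b] by case: b; case: (pos i) => [? []].
have mT_gt0 i : 0 < ms i setT by case: (pos i) => _ [].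
have -> : focal m = focal (vacuous_disjn_mass ms) by apply/setP=> A; rewrite !inE mE.
rewrite focal_vacuous_disjn_mass //; split=> //.
by rewrite card_setT_setC1 card_ffun card_bool card_ord.
Qed.
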